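(* Let $(H,\alpha)$ be a monoidal Hom-Hopf algebra with bijective antipode, let $(\Gamma,\gamma)$ be a left-covariant $(H,\alpha)$-Hom-FODC with differential $d$, and let $\mathcal{T}_\Gamma$ be its quantum Hom-tangent space, with automorphism $\bar\alpha'(X)=X\circ\alpha^{-1}$. Then there is a unique bilinear form $\langle\cdot,\cdot\rangle:\mathcal{T}_\Gamma\times\Gamma\to k$ which is a morphism in $\widetilde{\mathcal{H}}(\mathcal{M}_k)$ (i.e. $\langle X\circ\alpha^{-1},\gamma(\varrho)\rangle=\langle X,\varrho\rangle$) such that $$\langle X,h\cdot dg\rangle=\varepsilon(h)X(g)\quad\text{for all }g,h\in H,\ X\in\mathcal{T}_\Gamma.$$ With respect to this form, $\mathcal{T}_\Gamma$ and ${}^{coH}\Gamma=\omega_\Gamma(H)$ (with automorphism $\gamma|_{{}^{coH}\Gamma}$) form a nondegenerate dual pairing. Moreover $\langle X,\omega_\Gamma(h)\rangle=X(\alpha^{-1}(h))$ for all $h\in H$, $X\in\mathcal{T}_\Gamma$.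
   Context: All vector spaces are over a field $k$; $\widetilde{\mathcal{H}}(\mathcal{M}_k)$ has objects $(M,\mu)$ with $\mu$ a linear automorphism, morphisms commuting with the automorphisms. A monoidal Hom-Hopf algebra $(H,\alpha)$: multiplication with $\alpha(ab)=\alpha(a)\alpha(b)$, $\alpha(1)=1$, $\alpha(a)(bc)=(ab)\alpha(c)$, $1a=a1=\alpha(a)$; comultiplication $\Delta(h)=h_1\otimes h_2$ and counit $\varepsilon$ (algebra maps commuting with $\alpha$) with $\alpha^{-1}(h_1)\otimes h_{21}\otimes h_{22}=h_{11}\otimes h_{12}\otimes\alpha^{-1}(h_2)$, $\varepsilon(h_1)h_2=h_1\varepsilon(h_2)=\alpha^{-1}(h)$; antipode $S$ commuting with $\alpha$ with $S(h_1)h_2=h_1S(h_2)=\varepsilon(h)1$. Hom-bimodule $(M,\mu)$: $\alpha(a)\cdot(b\cdot m)=(ab)\cdot\mu(m)$, $1\cdot m=\mu(m)$, $(m\cdot a)\cdot\alpha(b)=\mu(m)\cdot(ab)$, $m\cdot1=\mu(m)$, $\alpha(a)\cdot(m\cdot b)=(a\cdot m)\cdot\alpha(b)$. Left Hom-comodule: $\rho(m)=m_{(-1)}\otimes m_{(0)}$ with $\alpha^{-1}(m_{(-1)})\otimes m_{(0)(-1)}\otimes m_{(0)(0)}=m_{(-1)1}\otimes m_{(-1)2}\otimes\mu^{-1}(m_{(0)})$, $\varepsilon(m_{(-1)})m_{(0)}=\mu^{-1}(m)$. A Hom-FODC over $(H,\alpha)$: an $(H,\alpha)$-Hom-bimodule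 $(\Gamma,\gamma)$ with linear $d:H\to\Gamma$, $d(hg)=h\cdot dg+dh\cdot g$, $d\circ\alpha=\gamma\circ d$, $\Gamma$ spanned by $(h\cdot dg)\cdot f$. Left-covariant: there is a left Hom-coaction $\phi(\omega)=\omega_{(-1)}\otimes\omega_{(0)}$ of $(H,\alpha)$ on $(\Gamma,\gamma)$ with $\phi(\alpha(h)\cdot(\omega\cdot g))=\Delta(\alpha(h))(\phi(\omega)\Delta(g))$ and $\phi(dh)=h_1\otimes dh_2$ (componentwise products in $H\otimes\Gamma$). Set ${}^{coH}\Gamma:=\{\varrho\in\Gamma:\phi(\varrho)=1\otimes\gamma^{-1}(\varrho)\}$, $\omega_\Gamma(h):=S(h_1)\cdot dh_2$, $\omega_\Gamma(H)=\{\omega_\Gamma(h):h\in H\}$, $\mathcal{R}_\Gamma:=\{h\in\ker\varepsilon:\omega_\Gamma(h)=0\}$. The quantum Hom-tangent space is $\mathcal{T}_\Gamma:=\{X\in H':\ X(1)=0,\ X(h)=0\ \forall h\in\mathcal{R}_\Gamma\}$, where $H'$ is the linear dual of $H$. *)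

(* Elements of tensor products V (x) W are represented by finite lists of
   simple tensors (seq (V * W)); two such representatives are identified when
   every bilinear (resp. trilinear) k-valued form takes the same value on them
   (over a field this is exactly equality in V (x) W). *)
From HB Require Import structures.
From mathcomp Require Import all_boot all_order all_algebra.
Set Implicit Arguments. Unset Strict Implicit. Unset Printing Implicit Defensive.
Import Order.TTheory GRing.Theory Num.Theory.
Local Open Scope ring_scope.

Section Defs.
Variable k : fieldType.

Definition linmap (V W : lmodType k) (f : V -> W) :=
  forall (c : k) x y, f (c *: x + y) = c *: f x + f y.
Definition linform (V : lmodType k) (f : V -> k) :=
  forall (c : k) x y, f (c *: x + y) = c * f x + f y.
Definition bilinmap (U V W : lmodType k) (f : U -> V -> W) :=
  (forall x, linmap (f x)) /\ (forall y, linmap (fun x => f x y)).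
Definition bilinform (U V : lmodType k) (f : U -> V -> k) :=
  (forall x, linform (f x)) /\ (forall y, linform (fun x => f x y)).
Definition trilinform (U V W : lmodType k) (f : U -> V -> W -> k) :=
  (forall x y, linform (f x y)) /\ (forall x z, linform (fun y => f x y z))
  /\ (forall y z, linform (fun x => f x y z)).

Definition teq2 (U V : lmodType k) (t t' : seq (U * V)) :=
  forall f : U -> V -> k, bilinform f ->
    \sum_(p <- t) f p.1 p.2 = \sum_(p <- t') f p.1 p.2.
Definition teq3 (U V W : lmodType k) (t t' : seq (U * V * W)) :=
  forall f : U -> V -> W -> k, trilinform f ->
    \sum_(p <- t) f p.1.1 p.1.2 p.2 = \sum_(p <- t') f p.1.1 p.1.2 p.2.

Definition tscale (U V : lmodType k) (c : k) (t : seq (U * V)) :=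
  [seq (c *: p.1, p.2) | p <- t].

Definition tlinmap (X U V : lmodType k) (f : X -> seq (U * V)) :=
  forall (c : k) x y, teq2 (f (c *: x + y)) (tscale c (f x) ++ f y).

Record HomHopfOps (H : lmodType k) := {
  hmul : H -> H -> H;
  hone : H;
  halpha : H -> H;
  halphainv : H -> H;
  hDelta : H -> seq (H * H);
  heps : H -> k;
  hS : H -> H
}.

Section HomHopf.
Variables (H : lmodType k) (O : HomHopfOps H).
Local Notation "a ** b" := (hmul O a b) (at level 40, left associativity).
Local Notation al := (halpha O).
Local Notation ali := (halphainv O).
Local Notation D := (hDelta O).
Local Notation e := (heps O).

Definition tmul (t t' : seq (H * H)) :=
  [seq (p.1 ** q.1, p.2 ** q.2) | p <- t, q <- t'].

Definition is_monoidal_HomHopf : Prop :=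
  [/\
      [/\ linmap al, cancel al ali & cancel ali al],
      [/\ bilinmap (hmul O),
          forall a b, al (a ** b) = al a ** al b,
          al (hone O) = hone O,
          forall a b c, al a ** (b ** c) = (a ** b) ** al c &
          forall a, hone O ** a = al a /\ a ** hone O = al a],
      [/\ tlinmap D, linform e,
          forall h, teq3
            [seq (ali p.1, q.1, q.2) | p <- D h, q <- D p.2]
            [seq (q.1, q.2, ali p.2) | p <- D h, q <- D p.1],
          forall h, \sum_(p <- D h) e p.1 *: p.2 = ali h /\
                    \sum_(p <- D h) e p.2 *: p.1 = ali h &
          [/\ forall a b, teq2 (D (a ** b)) (tmul (D a) (D b)),
              teq2 (D (hone O)) [:: (hone O, hone O)],
              forall a b, e (a ** b) = e a * e b,
              e (hone O) = 1 &
              (forall h, teq2 (D (al h)) [seq (al p.1, al p.2) | p <- D h]) /\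
              (forall h, e (al h) = e h)]] &
      [/\ linmap (hS O),
          forall h, hS O (al h) = al (hS O h) &
          forall h, \sum_(p <- D h) (hS O p.1 ** p.2) = e h *: hone O /\
                    \sum_(p <- D h) (p.1 ** hS O p.2) = e h *: hone O]].

Definition bijective_antipode : Prop := bijective (hS O).

Record FODCOps (Gm : lmodType k) := {
  lact : H -> Gm -> Gm;
  ract : Gm -> H -> Gm;
  ggamma : Gm -> Gm;
  ggammainv : Gm -> Gm;
  dd : H -> Gm;
  phi : Gm -> seq (H * Gm)
}.

Variables (Gm : lmodType k) (F : FODCOps Gm).
Local Notation "a .> w" := (lact F a w) (at level 45, right associativity).
Local Notation "w <. a" := (ract F w a) (at level 46, left associativity).
Local Notation g := (ggamma F).
Local Notation gi := (ggammainv F).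
Local Notation d := (dd F).

(* (Gm, gamma) is an (H, alpha)-Hom-bimodule (actions are morphisms in
   H~(M_k), i.e. commute with the structure automorphisms) *)
Definition is_HomBimodule : Prop :=
  [/\ [/\ linmap g, cancel g gi & cancel gi g],
      bilinmap (lact F), bilinmap (ract F),
      [/\ forall a b w, al a .> (b .> w) = (a ** b) .> g w,
          forall w, hone O .> w = g w,
          forall a b w, (w <. a) <. al b = g w <. (a ** b),
          forall w, w <. hone O = g w &
          forall a b w, al a .> (w <. b) = (a .> w) <. al b] &
      (forall a w, g (a .> w) = al a .> g w) /\
      (forall w a, g (w <. a) = g w <. al a)].

Definition is_HomFODC : Prop :=
  [/\ is_HomBimodule,
      linmap d,
      forall h g', d (h ** g') = h .> d g' + d h <. g',
      forall h, d (al h) = g (d h) &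
      forall w, exists s : seq (H * H * H),
        w = \sum_(t <- s) ((t.1.1 .> d t.1.2) <. t.2)].

Definition tscaleG (c : k) (t : seq (H * Gm)) := [seq (c *: p.1, p.2) | p <- t].

Definition is_left_HomComodule : Prop :=
  [/\ forall c x y, teq2 (phi F (c *: x + y)) (tscaleG c (phi F x) ++ phi F y),
      forall w, teq3
        [seq (ali p.1, q.1, q.2) | p <- phi F w, q <- phi F p.2]
        [seq (q.1, q.2, gi p.2) | p <- phi F w, q <- D p.1],
      forall w, \sum_(p <- phi F w) e p.1 *: p.2 = gi w &
      forall w, teq2 (phi F (g w)) [seq (al p.1, g p.2) | p <- phi F w]].

Definition is_left_covariant : Prop :=
  [/\ is_left_HomComodule,
      forall h w g', teq2 (phi F (al h .> (w <. g')))
        [seq (p.1 ** (q.1.1 ** q.2.1), p.2 .> (q.1.2 <. q.2.2))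
           | p <- D (al h), q <- [seq (x, y) | x <- phi F w, y <- D g']] &
      forall h, teq2 (phi F (d h)) [seq (p.1, d p.2) | p <- D h]].

Definition coinv (w : Gm) : Prop := teq2 (phi F w) [:: (hone O, gi w)].

Definition omegaG (h : H) : Gm := \sum_(p <- D h) (hS O p.1 .> d p.2).

Definition RG (h : H) : Prop := e h = 0 /\ omegaG h = 0.

(* quantum Hom-tangent space, as a predicate on the linear dual H' *)
Definition tangent (X : H -> k) : Prop :=
  [/\ linform X, X (hone O) = 0 & forall h, RG h -> X h = 0].

End HomHopf.
End Defs.

(* By the Leibniz rule every element of Gamma is a sum of terms [a . d b], so
   the pairing is forced: [<X, sum_i a_i . d b_i> = sum_i eps(a_i) X(b_i)].
   It is well defined because the projection [w |-> S(w_(-1)) . w_(0)] sends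
   [a . d b] to [eps(a) gamma(omega(b))]: a relation [sum_i a_i . d b_i = 0]
   forces [omega(u) = 0] for [u = sum_i eps(a_i) b_i], so [u - eps(u) 1] lies
   in [R_Gamma] and is killed by [X]. The same projection fixes coinvariants,
   whence [coH Gamma = omega(H)] once each [omega(h)] is known to be
   coinvariant; this follows from [d g = g_1 . omega(g_2)] and the covariance
   of [d] after twisting by the antipode. Nondegeneracy comes from
   [<X, omega(h)> = X(alpha^-1 h)] and from the tangent vectors
   [h |-> l(omega(alpha h))] attached to linear forms [l] on Gamma.
   The tensor identities of the axioms are stated against bilinear forms;
   since linear forms separate vectors (Zorn), they hold against bilinear
   maps into any space. *)

From HB Require Import structures.
From mathcomp Require Import all_boot all_order all_algebra.
From mathcomp Require Import boolp classical_sets.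
Import GRing.Theory.
Local Open Scope ring_scope.
Set Implicit Arguments. Unset Strict Implicit. Unset Printing Implicit Defensive.

Section LinearAlgebra.
Variable k : fieldType.

Section LinearMaps.
Variables (V W : lmodType k) (f : V -> W).
Hypothesis f_lin : linmap f.

Lemma linmapD x y : f (x + y) = f x + f y.
Proof. by have := f_lin 1 x y; rewrite !scale1r. Qed.

Lemma linmap0 : f 0 = 0.
Proof. by apply: (addrI (f 0)); rewrite -linmapD !addr0. Qed.

Lemma linmapZ c x : f (c *: x) = c *: f x.
Proof. by have := f_lin c x 0; rewrite !addr0 linmap0 addr0. Qed.

Lemma linmapN x : f (- x) = - f x.
Proof. by rewrite -scaleN1r linmapZ scaleN1r. Qed.

Lemma linmapB x y : f (x - y) = f x - f y.
Proof. by rewrite linmapD linmapN. Qed.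

Lemma linmap_sum I (s : seq I) (F : I -> V) :
  f (\sum_(i <- s) F i) = \sum_(i <- s) f (F i).
Proof. by rewrite (big_morph f linmapD linmap0). Qed.

End LinearMaps.

Section LinearForms.
Variables (V : lmodType k) (f : V -> k).
Hypothesis f_lin : linform f.

Lemma linform0 : f 0 = 0.
Proof. exact: (@linmap0 _ k^o _ f_lin). Qed.

Lemma linformZ c x : f (c *: x) = c * f x.
Proof. exact: (@linmapZ _ k^o _ f_lin). Qed.

Lemma linformN x : f (- x) = - f x.
Proof. exact: (@linmapN _ k^o _ f_lin). Qed.

Lemma linformB x y : f (x - y) = f x - f y.
Proof. exact: (@linmapB _ k^o _ f_lin). Qed.

Lemma linform_sum I (s : seq I) (F : I -> V) :
  f (\sum_(i <- s) F i) = \sum_(i <- s) f (F i).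
Proof. exact: (@linmap_sum _ k^o _ f_lin). Qed.

End LinearForms.

Lemma linmap_comp (U V W : lmodType k) (f : V -> W) (g : U -> V) :
  linmap f -> linmap g -> linmap (f \o g).
Proof. by move=> f_lin g_lin c x y /=; rewrite g_lin f_lin. Qed.

Lemma linmap_can (V W : lmodType k) (f : V -> W) (g : W -> V) :
  linmap f -> cancel f g -> cancel g f -> linmap g.
Proof. by move=> f_lin fK gK c x y; apply: (can_inj fK); rewrite f_lin !gK. Qed.

Lemma bilinmap_comp (U V U' V' W : lmodType k) (G : U' -> V' -> W)
    (A : U -> U') (B : V -> V') :
  bilinmap G -> linmap A -> linmap B -> bilinmap (fun x y => G (A x) (B y)).
Proof. by move=> [G1 G2] A_lin B_lin; split=> x c a b /=; rewrite ?A_lin ?B_lin ?G1 ?G2. Qed.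

Lemma bilinmap_compl (U V U' W : lmodType k) (G : U' -> V -> W) (A : U -> U') :
  bilinmap G -> linmap A -> bilinmap (fun x y => G (A x) y).
Proof. by move=> [G1 G2] A_lin; split=> x c a b /=; rewrite ?A_lin ?G1 ?G2. Qed.

Lemma bilinmap_compr (U V V' W : lmodType k) (G : U -> V' -> W) (B : V -> V') :
  bilinmap G -> linmap B -> bilinmap (fun x y => G x (B y)).
Proof. by move=> [G1 G2] B_lin; split=> x c a b /=; rewrite ?B_lin ?G1 ?G2. Qed.

Lemma bilinmap_sum (U V W : lmodType k) I (s : seq I) (G : I -> U -> V -> W) :
  (forall i, bilinmap (G i)) -> bilinmap (fun x y => \sum_(i <- s) G i x y).
Proof.
move=> G_bilin; split=> x c a b /=; rewrite scaler_sumr -big_split;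
  by apply: eq_bigr => i _; case: (G_bilin i) => [G1 G2]; rewrite ?G1 ?G2.
Qed.

Lemma sum_scale_fst (U V W : lmodType k) (G : U -> V -> W) (c : k) (t : seq (U * V)) :
  bilinmap G ->
  \sum_(p <- [seq (c *: q.1, q.2) | q <- t]) G p.1 p.2 = c *: \sum_(p <- t) G p.1 p.2.
Proof.
move=> [_ G2]; rewrite big_map scaler_sumr.
by apply: eq_bigr => p _; rewrite (linmapZ (G2 _)).
Qed.

Definition trilinmap (U V X W : lmodType k) (G : U -> V -> X -> W) :=
  [/\ forall x y, linmap (G x y), forall x z, linmap (fun y => G x y z)
    & forall y z, linmap (fun x => G x y z)].

Lemma trilinmap_comp_l (U V Z U' X W : lmodType k) (B : U' -> X -> W)
    (M : U -> V -> U') (C : Z -> X) :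
  bilinmap B -> bilinmap M -> linmap C -> trilinmap (fun x y z => B (M x y) (C z)).
Proof.
move=> [B1 B2] [M1 M2] C_lin.
by split=> x y c a b /=; rewrite ?C_lin ?M1 ?M2 ?B1 ?B2.
Qed.

Lemma trilinmap_comp_r (U U' V X V' W : lmodType k) (B : U' -> V' -> W)
    (A : U -> U') (M : V -> X -> V') :
  bilinmap B -> linmap A -> bilinmap M -> trilinmap (fun x y z => B (A x) (M y z)).
Proof.
move=> [B1 B2] A_lin [M1 M2].
by split=> x y c a b /=; rewrite ?A_lin ?M1 ?M2 ?B1 ?B2.
Qed.

Section Separation.
Variables (V : lmodType k) (v : V).
Hypothesis v_neq0 : v != 0.

Let closed (A : set V) := forall c x y, A x -> A y -> A (c *: x + y).

Lemma exists_hyperplane_avoiding : exists A : set V,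
  [/\ closed A, A 0, ~ A v & forall x, exists c, A (x - c *: v)].
Proof.
have [A [[A_cl Av] A_max]] : exists A : set V, (closed A /\ ~ A v) /\
    forall B, (A `<` B)%classic -> ~ (closed B /\ ~ B v).
  apply: Zorn_bigcup => Fa FP Ftot; split; last by move=> [X /FP[]].
  move=> c x y [X FX Xx] [Y FY Yy].
  have [XY|YX] := Ftot _ _ FX FY.
    by exists Y => //; apply: (FP _ FY).1 => //; exact: XY.
  by exists X => //; apply: (FP _ FX).1 => //; exact: YX.
have A0 : A 0.
  have [[a Aa]|A_empty] := pselect (exists a, A a).
    by have := A_cl (-1) a a Aa Aa; rewrite scaleN1r addNr.
  exfalso; apply: (A_max [set 0]%classic); last first.
    by split=> [c x y -> ->|/= v0]; [rewrite scaler0 addr0 | move: v_neq0; rewrite v0 eqxx].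
  split=> [x Ax|sub0]; first by case: A_empty; exists x.
  by apply: A_empty; exists 0; apply: sub0.
exists A; split=> // x; apply: contrapT => x_out.
pose B := [set y | exists c, A (y - c *: x)]%classic.
apply: (A_max B).
  split=> [y Ay|BA]; first by exists 0; rewrite scale0r subr0.
  by apply: x_out; exists 0; rewrite scale0r subr0; apply: BA; exists 1; rewrite scale1r subrr.
split=> [c y z [c1 Ay] [c2 Az]|[c Avx]].
  exists (c * c1 + c2).
  suff -> : c *: y + z - (c * c1 + c2) *: x = c *: (y - c1 *: x) + (z - c2 *: x).
    exact: A_cl.
  by rewrite scalerDl scalerBr scalerA opprD addrACA.
have [c0|c_neq0] := eqVneq c 0; first by apply: Av; rewrite -[v]subr0 -(scale0r x) -c0.
apply: x_out; exists c^-1.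
suff -> : x - c^-1 *: v = (- c^-1) *: (v - c *: x) + 0 by exact: A_cl.
by rewrite addr0 scalerBr scalerA mulNr mulVf // scaleN1r opprK scaleNr addrC.
Qed.

Lemma exists_linform_eq1 : exists2 f : V -> k, linform f & f v = 1.
Proof.
have [A [A_cl A0 Av A_tot]] := exists_hyperplane_avoiding.
have coord_uniq x c1 c2 : A (x - c1 *: v) -> A (x - c2 *: v) -> c1 = c2.
  move=> A1 A2; have [//|c12] := eqVneq c1 c2; case: Av.
  have := A_cl ((c2 - c1)^-1) _ _ (A_cl (-1) _ _ A2 A1) A0.
  rewrite scaleN1r opprB addrA subrK -scalerBl scalerA mulVf ?scale1r ?addr0 //.
  by rewrite subr_eq0 eq_sym.
pose f x := projT1 (cid (A_tot x)).
have fP x : A (x - f x *: v) by rewrite /f; case: cid.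
exists f; last by apply: (coord_uniq v) (fP v) _; rewrite scale1r subrr.
move=> c x y; apply: (coord_uniq (c *: x + y)) (fP _) _.
suff -> : c *: x + y - (c * f x + f y) *: v = c *: (x - f x *: v) + (y - f y *: v).
  exact: A_cl.
by rewrite scalerDl scalerBr scalerA opprD addrACA.
Qed.

End Separation.

Lemma linform_separates (V : lmodType k) (x y : V) :
  (forall f : V -> k, linform f -> f x = f y) -> x = y.
Proof.
move=> fxy; apply/eqP; rewrite -subr_eq0; apply/negPn/negP.
move=> /exists_linform_eq1[f f_lin fxy1]; move: (fxy f f_lin) => /eqP.
by rewrite -subr_eq0 -linformB // fxy1 oner_eq0.
Qed.

Lemma teq2_sum (U V W : lmodType k) (t t' : seq (U * V)) (G : U -> V -> W) :
  teq2 t t' -> bilinmap G ->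
  \sum_(p <- t) G p.1 p.2 = \sum_(p <- t') G p.1 p.2.
Proof.
move=> tt' [G1 G2]; apply: linform_separates => f f_lin.
rewrite !(linform_sum f_lin); apply: (tt' (fun x y => f (G x y))).
by split=> x c a b /=; rewrite ?G1 ?G2 f_lin.
Qed.

Lemma teq3_sum (U V X W : lmodType k) (t t' : seq (U * V * X)) (G : U -> V -> X -> W) :
  teq3 t t' -> trilinmap G ->
  \sum_(p <- t) G p.1.1 p.1.2 p.2 = \sum_(p <- t') G p.1.1 p.1.2 p.2.
Proof.
move=> tt' [G1 G2 G3]; apply: linform_separates => f f_lin.
rewrite !(linform_sum f_lin); apply: (tt' (fun x y z => f (G x y z))).
by split; [|split] => x y c a b /=; rewrite ?G1 ?G2 ?G3 f_lin.
Qed.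

End LinearAlgebra.

Section HomHopf.
Variables (k : fieldType) (H : lmodType k) (O : HomHopfOps H)
  (Gm : lmodType k) (F : FODCOps H Gm).
Hypotheses (O_hopf : is_monoidal_HomHopf O) (F_fodc : is_HomFODC O F)
  (F_cov : is_left_covariant O F).

Local Notation "a ** b" := (hmul O a b) (at level 40, left associativity).
Local Notation al := (halpha O).
Local Notation ali := (halphainv O).
Local Notation D := (hDelta O).
Local Notation e := (heps O).
Local Notation S := (hS O).
Local Notation one := (hone O).
Local Notation "a .> w" := (lact F a w) (at level 45, right associativity).
Local Notation "w <. a" := (ract F w a) (at level 46, left associativity).
Local Notation g := (ggamma F).
Local Notation gi := (ggammainv F).
Local Notation d := (dd F).
Local Notation ph := (phi F).
Local Notation om := (omegaG O F).

Lemma alpha_lin : linmap al. Proof. by case: O_hopf => [[]]. Qed.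
Lemma alphaK : cancel al ali. Proof. by case: O_hopf => [[]]. Qed.
Lemma alphaVK : cancel ali al. Proof. by case: O_hopf => [[]]. Qed.
Lemma hmul_bilin : bilinmap (hmul O). Proof. by case: O_hopf => _ []. Qed.
Lemma alpha1 : al one = one. Proof. by case: O_hopf => _ []. Qed.
Lemma hmulA a b c : al a ** (b ** c) = (a ** b) ** al c.
Proof. by case: O_hopf => _ []. Qed.
Lemma mul1h a : one ** a = al a.
Proof. by case: O_hopf => _ [_ _ _ _ /(_ a) []]. Qed.
Lemma mulh1 a : a ** one = al a.
Proof. by case: O_hopf => _ [_ _ _ _ /(_ a) []]. Qed.

Lemma Delta_lin : tlinmap D. Proof. by case: O_hopf => _ _ []. Qed.
Lemma eps_lin : linform e. Proof. by case: O_hopf => _ _ []. Qed.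
Lemma coassoc h : teq3 [seq (ali p.1, q.1, q.2) | p <- D h, q <- D p.2]
                       [seq (q.1, q.2, ali p.2) | p <- D h, q <- D p.1].
Proof. by case: O_hopf => _ _ []. Qed.
Lemma counitl h : \sum_(p <- D h) e p.1 *: p.2 = ali h.
Proof. by case: O_hopf => _ _ [_ _ _ /(_ h) []]. Qed.
Lemma counitr h : \sum_(p <- D h) e p.2 *: p.1 = ali h.
Proof. by case: O_hopf => _ _ [_ _ _ /(_ h) []]. Qed.
Lemma DeltaM a b : teq2 (D (a ** b)) (tmul O (D a) (D b)).
Proof. by case: O_hopf => _ _ [_ _ _ _ []]. Qed.
Lemma Delta1 : teq2 (D one) [:: (one, one)].
Proof. by case: O_hopf => _ _ [_ _ _ _ []]. Qed.
Lemma epsM a b : e (a ** b) = e a * e b.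
Proof. by case: O_hopf => _ _ [_ _ _ _ []]. Qed.
Lemma eps1 : e one = 1.
Proof. by case: O_hopf => _ _ [_ _ _ _ []]. Qed.
Lemma Delta_alpha h : teq2 (D (al h)) [seq (al p.1, al p.2) | p <- D h].
Proof. by case: O_hopf => _ _ [_ _ _ _ [_ _ _ _ []]]. Qed.
Lemma eps_alpha h : e (al h) = e h.
Proof. by case: O_hopf => _ _ [_ _ _ _ [_ _ _ _ []]]. Qed.

Lemma antipode_lin : linmap S. Proof. by case: O_hopf => _ _ _ []. Qed.
Lemma antipode_alpha h : S (al h) = al (S h). Proof. by case: O_hopf => _ _ _ []. Qed.
Lemma antipodel h : \sum_(p <- D h) (S p.1 ** p.2) = e h *: one.
Proof. by case: O_hopf => _ _ _ [_ _ /(_ h) []]. Qed.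
Lemma antipoder h : \sum_(p <- D h) (p.1 ** S p.2) = e h *: one.
Proof. by case: O_hopf => _ _ _ [_ _ /(_ h) []]. Qed.

Let F_bimod : is_HomBimodule O F. Proof. by case: F_fodc. Qed.
Lemma gamma_lin : linmap g. Proof. by case: F_bimod => [[]]. Qed.
Lemma gammaK : cancel g gi. Proof. by case: F_bimod => [[]]. Qed.
Lemma gammaVK : cancel gi g. Proof. by case: F_bimod => [[]]. Qed.
Lemma lact_bilin : bilinmap (lact F). Proof. by case: F_bimod. Qed.
Lemma ract_bilin : bilinmap (ract F). Proof. by case: F_bimod. Qed.
Lemma lactA a b w : al a .> (b .> w) = (a ** b) .> g w.
Proof. by case: F_bimod => _ _ _ []. Qed.
Lemma lact1 w : one .> w = g w. Proof. by case: F_bimod => _ _ _ []. Qed.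
Lemma ract1 w : w <. one = g w. Proof. by case: F_bimod => _ _ _ []. Qed.
Lemma lractA a b w : al a .> (w <. b) = (a .> w) <. al b.
Proof. by case: F_bimod => _ _ _ []. Qed.
Lemma gamma_lact a w : g (a .> w) = al a .> g w.
Proof. by case: F_bimod => _ _ _ _ []. Qed.

Lemma d_lin : linmap d. Proof. by case: F_fodc. Qed.
Lemma d_leibniz a b : d (a ** b) = a .> d b + d a <. b. Proof. by case: F_fodc. Qed.
Lemma d_alpha h : d (al h) = g (d h). Proof. by case: F_fodc. Qed.
Lemma d_span w : exists s : seq (H * H * H),
  w = \sum_(t <- s) ((t.1.1 .> d t.1.2) <. t.2).
Proof. by case: F_fodc. Qed.

Lemma coaction_lin c x y : teq2 (ph (c *: x + y)) (tscaleG c (ph x) ++ ph y).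
Proof. by case: F_cov => [[]]. Qed.
Lemma coaction_gamma w : teq2 (ph (g w)) [seq (al p.1, g p.2) | p <- ph w].
Proof. by case: F_cov => [[]]. Qed.
Lemma coaction_bimod h w b : teq2 (ph (al h .> (w <. b)))
  [seq (p.1 ** (q.1.1 ** q.2.1), p.2 .> (q.1.2 <. q.2.2))
     | p <- D (al h), q <- [seq (x, y) | x <- ph w, y <- D b]].
Proof. by case: F_cov. Qed.
Lemma coaction_d h : teq2 (ph (d h)) [seq (p.1, d p.2) | p <- D h].
Proof. by case: F_cov. Qed.

Lemma alphaV_lin : linmap ali. Proof. exact: linmap_can alpha_lin alphaK alphaVK. Qed.
Lemma gammaV_lin : linmap gi. Proof. exact: linmap_can gamma_lin gammaK gammaVK. Qed.

Section Sums.
Variable W : lmodType k.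

Lemma sum_Delta_lin (G : H -> H -> W) :
  bilinmap G -> linmap (fun h => \sum_(p <- D h) G p.1 p.2).
Proof.
move=> G_bilin c x y.
by rewrite (teq2_sum (Delta_lin c x y) G_bilin) big_cat sum_scale_fst.
Qed.

Lemma sum_DeltaM (G : H -> H -> W) a b : bilinmap G ->
  \sum_(p <- D (a ** b)) G p.1 p.2 =
  \sum_(p <- D a) \sum_(q <- D b) G (p.1 ** q.1) (p.2 ** q.2).
Proof. by move=> G_bilin; rewrite (teq2_sum (DeltaM a b) G_bilin) big_allpairs_dep. Qed.

Lemma sum_Delta1 (G : H -> H -> W) : bilinmap G ->
  \sum_(p <- D one) G p.1 p.2 = G one one.
Proof. by move=> G_bilin; rewrite (teq2_sum Delta1 G_bilin) big_seq1. Qed.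

Lemma sum_Delta_alpha (G : H -> H -> W) h : bilinmap G ->
  \sum_(p <- D (al h)) G p.1 p.2 = \sum_(p <- D h) G (al p.1) (al p.2).
Proof. by move=> G_bilin; rewrite (teq2_sum (Delta_alpha h) G_bilin) big_map. Qed.

Lemma sum_Delta_alphaV (G : H -> H -> W) h : bilinmap G ->
  \sum_(p <- D (ali h)) G p.1 p.2 = \sum_(p <- D h) G (ali p.1) (ali p.2).
Proof.
move=> G_bilin; rewrite -{2}[h]alphaVK (sum_Delta_alpha (G := fun a b => G (ali a) (ali b))).
  by apply: eq_bigr => p _; rewrite !alphaK.
exact: bilinmap_comp G_bilin alphaV_lin alphaV_lin.
Qed.

Lemma sum_coassoc (G : H -> H -> H -> W) h : trilinmap G ->
  \sum_(p <- D h) \sum_(q <- D p.2) G (ali p.1) q.1 q.2 =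
  \sum_(p <- D h) \sum_(q <- D p.1) G q.1 q.2 (ali p.2).
Proof. by move=> G_trilin; have := teq3_sum (coassoc h) G_trilin; rewrite !big_allpairs_dep. Qed.

Lemma sum_coaction_lin (C : H -> Gm -> W) :
  bilinmap C -> linmap (fun w => \sum_(p <- ph w) C p.1 p.2).
Proof.
move=> C_bilin c x y.
by rewrite (teq2_sum (coaction_lin c x y) C_bilin) big_cat sum_scale_fst.
Qed.

Lemma sum_coaction_gamma (C : H -> Gm -> W) w : bilinmap C ->
  \sum_(p <- ph (g w)) C p.1 p.2 = \sum_(p <- ph w) C (al p.1) (g p.2).
Proof. by move=> C_bilin; rewrite (teq2_sum (coaction_gamma w) C_bilin) big_map. Qed.

Lemma sum_coaction_d (C : H -> Gm -> W) h : bilinmap C ->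
  \sum_(p <- ph (d h)) C p.1 p.2 = \sum_(p <- D h) C p.1 (d p.2).
Proof. by move=> C_bilin; rewrite (teq2_sum (coaction_d h) C_bilin) big_map. Qed.

Lemma sum_coaction_coinv (C : H -> Gm -> W) w : bilinmap C -> coinv O F w ->
  \sum_(p <- ph w) C p.1 p.2 = C one (gi w).
Proof. by move=> C_bilin w_coinv; rewrite (teq2_sum w_coinv C_bilin) big_seq1. Qed.

Lemma sum_coaction_lact (C : H -> Gm -> W) a w : bilinmap C ->
  \sum_(q <- ph (a .> w)) C q.1 q.2 =
  \sum_(p <- D a) \sum_(q <- ph w) C (p.1 ** q.1) (p.2 .> q.2).
Proof.
move=> C_bilin; have [mul_r _] := hmul_bilin; have [lact_r _] := lact_bilin.
have -> : a .> w = al (ali a) .> (gi w <. one) by rewrite alphaVK ract1 gammaVK.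
rewrite (teq2_sum (coaction_bimod _ _ _) C_bilin) big_allpairs_dep alphaVK.
apply: eq_bigr => p _; rewrite big_allpairs_dep -[in RHS](gammaVK w).
rewrite (sum_coaction_gamma (C := fun u v => C (p.1 ** u) (p.2 .> v))); last first.
  exact: bilinmap_comp C_bilin (mul_r _) (lact_r _).
apply: eq_bigr => q _.
rewrite (sum_Delta1 (G := fun u v => C (p.1 ** (q.1 ** u)) (p.2 .> (q.2 <. v)))) ?mulh1 ?ract1 //.
apply: bilinmap_comp C_bilin _ _.
  exact: linmap_comp (mul_r _) (mul_r _).
exact: linmap_comp (lact_r _) (ract_bilin.1 _).
Qed.

End Sums.

Lemma alphaV1 : ali one = one. Proof. by rewrite -{1}alpha1 alphaK. Qed.
Lemma eps_alphaV h : e (ali h) = e h. Proof. by rewrite -{2}(alphaVK h) eps_alpha. Qed.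
Lemma antipode_alphaV h : S (ali h) = ali (S h).
Proof. by apply: (can_inj alphaK); rewrite alphaVK -antipode_alpha alphaVK. Qed.
Lemma d_alphaV h : d (ali h) = gi (d h).
Proof. by apply: (can_inj gammaK); rewrite gammaVK -d_alpha alphaVK. Qed.

Lemma d1 : d one = 0.
Proof.
have := d_leibniz one one; rewrite mul1h alpha1 lact1 ract1 -d_alpha alpha1 => d1D.
by apply: (addrI (d one)); rewrite addr0 -d1D.
Qed.

Lemma antipode1 : S one = one.
Proof.
have := antipodel one; rewrite eps1 scale1r (sum_Delta1 (G := fun a b => S a ** b)) ?mulh1.
  by move/(congr1 ali); rewrite alphaK alphaV1.
exact: bilinmap_compl hmul_bilin antipode_lin.
Qed.

Lemma eps_antipode h : e (S h) = e h.
Proof.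
have eS_sum : \sum_(p <- D h) e (S p.1) * e p.2 = e (S (ali h)).
  rewrite -counitr (linmap_sum antipode_lin) (linform_sum eps_lin).
  by apply: eq_bigr => p _; rewrite (linmapZ antipode_lin) (linformZ eps_lin) mulrC.
rewrite -eps_alphaV -antipode_alphaV -eS_sum.
have := congr1 e (antipodel h); rewrite (linformZ eps_lin) eps1 mulr1 => <-.
by rewrite (linform_sum eps_lin); apply: eq_bigr => p _; rewrite epsM.
Qed.

Lemma omega_bilin : bilinmap (fun a b => S a .> d b).
Proof. exact: bilinmap_comp lact_bilin antipode_lin d_lin. Qed.

Lemma omega_lin : linmap om. Proof. exact: sum_Delta_lin omega_bilin. Qed.

Lemma omega_alpha h : om (al h) = g (om h).
Proof.
rewrite /omegaG (sum_Delta_alpha _ omega_bilin) (linmap_sum gamma_lin).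
by apply: eq_bigr => p _; rewrite antipode_alpha d_alpha gamma_lact.
Qed.

Lemma omega_alphaV h : om (ali h) = gi (om h).
Proof. by apply: (can_inj gammaK); rewrite gammaVK -omega_alpha alphaVK. Qed.

Lemma omega1 : om one = 0.
Proof. by rewrite /omegaG (sum_Delta1 omega_bilin) d1 (linmap0 (lact_bilin.1 _)). Qed.

Lemma d_omega h : d h = \sum_(p <- D h) (p.1 .> om p.2).
Proof.
have twist p : p.1 .> om p.2 =
    \sum_(q <- D p.2) ((ali p.1 ** S q.1) .> g (d q.2)).
  rewrite /omegaG (linmap_sum (lact_bilin.1 _)).
  by apply: eq_bigr => q _; rewrite -{1}[p.1]alphaVK lactA.
under [RHS]eq_bigr do rewrite twist.
rewrite (sum_coassoc (G := fun x y z => (x ** S y) .> g (d z))); last first.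
  apply: trilinmap_comp_l lact_bilin _ (linmap_comp gamma_lin d_lin).
  exact: bilinmap_compr hmul_bilin antipode_lin.
have inner p : \sum_(q <- D p.1) ((q.1 ** S q.2) .> g (d (ali p.2))) = e p.1 *: g (d p.2).
  rewrite -(linmap_sum (lact_bilin.2 _)) /= antipoder (linmapZ (lact_bilin.2 _)) /=.
  by rewrite lact1 d_alphaV gammaVK.
under eq_bigr do rewrite inner.
rewrite -[in LHS](alphaVK h) d_alpha -counitl (linmap_sum d_lin) (linmap_sum gamma_lin).
by apply: eq_bigr => p _; rewrite (linmapZ d_lin) (linmapZ gamma_lin).
Qed.

Section CoinvDefect.
Variable W : lmodType k.

Definition coinv_defect (C : H -> Gm -> W) h :=
  \sum_(q <- ph (om h)) C q.1 q.2 - C one (gi (om h)).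

Lemma eq_coinv_defect (C C' : H -> Gm -> W) h :
  C =2 C' -> coinv_defect C h = coinv_defect C' h.
Proof. by move=> CC'; rewrite /coinv_defect CC'; congr (_ - _); apply: eq_bigr. Qed.

Lemma coinv_defect_lin (C : H -> Gm -> W) : bilinmap C -> linmap (coinv_defect C).
Proof.
move=> C_bilin c x y; rewrite /coinv_defect omega_lin (sum_coaction_lin C_bilin).
by rewrite gammaV_lin C_bilin.1 scalerBr opprD addrACA.
Qed.

Lemma coinv_defect_comb (c : k) (C1 C2 : H -> Gm -> W) h :
  coinv_defect (fun x w => c *: C1 x w + C2 x w) h =
  c *: coinv_defect C1 h + coinv_defect C2 h.
Proof. by rewrite /coinv_defect big_split /= -scaler_sumr scalerBr opprD addrACA. Qed.

Lemma coinv_defect_sum I (s : seq I) (C : I -> H -> Gm -> W) h :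
  coinv_defect (fun x w => \sum_(i <- s) C i x w) h = \sum_(i <- s) coinv_defect (C i) h.
Proof. by rewrite /coinv_defect exchange_big -sumrB. Qed.

Lemma coinv_defect_alpha (C : H -> Gm -> W) h : bilinmap C ->
  coinv_defect (fun x w => C (al x) (g w)) h = coinv_defect C (al h).
Proof.
move=> C_bilin; rewrite /coinv_defect omega_alpha gammaK alpha1 gammaVK.
by rewrite (sum_coaction_gamma _ C_bilin).
Qed.

(* [d g = g_1 . omega(g_2)] and [phi(d g) = g_1 (x) d g_2] together say that
   [Delta(g_1) (phi(omega(g_2)) - 1 (x) gamma^-1 omega(g_2))] vanishes. *)
Lemma coinv_defect_twisted (C : H -> Gm -> W) g0 : bilinmap C ->
  \sum_(p <- D g0) \sum_(r <- D p.1)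
     coinv_defect (fun x w => C (r.1 ** x) (r.2 .> w)) p.2 = 0.
Proof.
move=> C_bilin; have [C_r C_l] := C_bilin.
have unit_part : \sum_(p <- D g0) \sum_(r <- D p.1) C (r.1 ** one) (r.2 .> gi (om p.2))
    = \sum_(p <- D g0) C p.1 (d p.2).
  pose G x y z := C (x ** one) (y .> gi (om (al z))).
  transitivity (\sum_(p <- D g0) \sum_(r <- D p.1) G r.1 r.2 (ali p.2)).
    by apply: eq_bigr => p _; apply: eq_bigr => r _; rewrite /G alphaVK.
  rewrite -sum_coassoc; last first.
    apply: trilinmap_comp_r C_bilin (hmul_bilin.2 _) _.
    apply: bilinmap_compr lact_bilin _.
    exact: linmap_comp gammaV_lin (linmap_comp omega_lin alpha_lin).
  apply: eq_bigr => p _; rewrite d_omega (linmap_sum (C_r _)).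
  by apply: eq_bigr => r _; rewrite /G mulh1 alphaVK omega_alpha gammaK.
have := sum_coaction_d g0 C_bilin.
rewrite d_omega (linmap_sum (sum_coaction_lin C_bilin)) -unit_part => /eqP.
rewrite -subr_eq0 -sumrB => /eqP defect0; rewrite -[RHS]defect0; apply: eq_bigr => p _.
rewrite (sum_coaction_lact _ _ C_bilin) -sumrB; apply: eq_bigr => r _.
by rewrite /coinv_defect.
Qed.

End CoinvDefect.

(* Summing [coinv_defect_twisted] against [S(h_1) (x) h_2] and using
   coassociativity and [S(p_1) p_2 = eps(p) 1] leaves the defect at
   [alpha^-2 h]; the shifts by [alpha] and [gamma] in [E] absorb the
   Hom-associativity constraints. *)
Section CoinvDefectVanishes.
Variables (W : lmodType k) (C : H -> Gm -> W).
Hypothesis C_bilin : bilinmap C.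

Let E a b := coinv_defect (fun x w => C (a ** al x) (b .> g w)).
Let K a b z := \sum_(t <- D (S a ** b)) E t.1 t.2 z.

Let E_lin a b : linmap (E a b).
Proof.
apply: coinv_defect_lin; exact: bilinmap_comp C_bilin
  (linmap_comp (hmul_bilin.1 a) alpha_lin) (linmap_comp (lact_bilin.1 b) gamma_lin).
Qed.

Let E_bilin z : bilinmap (fun a b => E a b z).
Proof.
have [C_r C_l] := C_bilin.
split=> a c b1 b2; rewrite /E -coinv_defect_comb; apply: eq_coinv_defect => x w.
  by rewrite lact_bilin.2 C_r.
by rewrite hmul_bilin.2 C_l.
Qed.

Let K_trilin : trilinmap K.
Proof.
split=> [a b c z1 z2|a z c b1 b2|b z c a1 a2]; rewrite /K.
- rewrite scaler_sumr -big_split; apply: eq_bigr => t _; exact: E_lin.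
- by rewrite hmul_bilin.1 (sum_Delta_lin (E_bilin z)).
- by rewrite antipode_lin hmul_bilin.2 (sum_Delta_lin (E_bilin z)).
Qed.

Let K_twisted u p :
  \sum_(r <- D p.1) coinv_defect (fun x w =>
     \sum_(v <- D (S u)) C (v.1 ** (r.1 ** x)) (v.2 .> (r.2 .> w))) p.2
  = K (ali u) p.1 p.2.
Proof.
transitivity (\sum_(v <- D (S u)) \sum_(r <- D p.1)
                E (ali v.1 ** r.1) (ali v.2 ** r.2) p.2).
  rewrite exchange_big; apply: eq_bigr => r _; rewrite coinv_defect_sum.
  apply: eq_bigr => v _; apply: eq_coinv_defect => x w.
  by rewrite -{1}[v.1]alphaVK hmulA -{1}[v.2]alphaVK lactA.
rewrite -(sum_Delta_alphaV (G := fun v1 v2 =>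
    \sum_(r <- D p.1) E (v1 ** r.1) (v2 ** r.2) p.2)).
  by rewrite /K antipode_alphaV (sum_DeltaM _ _ (E_bilin p.2)).
apply: bilinmap_sum => r.
exact: bilinmap_comp (E_bilin p.2) (hmul_bilin.2 r.1) (hmul_bilin.2 r.2).
Qed.

Let K_antipode u z : \sum_(p <- D u) K p.1 p.2 z = e u *: E one one z.
Proof.
have L_lin := sum_Delta_lin (E_bilin z).
by rewrite -(sum_Delta1 (E_bilin z)) -(linmapZ L_lin) -antipodel (linmap_sum L_lin).
Qed.

Lemma coinv_defect0 h : coinv_defect C h = 0.
Proof.
have E11 z : E one one z = coinv_defect C (al (al z)).
  rewrite /E -(coinv_defect_alpha _ C_bilin) -coinv_defect_alpha; last first.
    exact: bilinmap_comp C_bilin alpha_lin gamma_lin.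
  by apply: eq_coinv_defect => x w; rewrite mul1h lact1.
have vanish : \sum_(u <- D h) \sum_(p <- D u.2) K (ali u.1) p.1 p.2 = 0.
  rewrite big1 // => u _; rewrite -[RHS](coinv_defect_twisted u.2 (C := fun x w =>
    \sum_(v <- D (S u.1)) C (v.1 ** x) (v.2 .> w))).
    by apply: eq_bigr => p _; rewrite -K_twisted.
  apply: bilinmap_sum => v.
  exact: bilinmap_comp C_bilin (hmul_bilin.1 v.1) (lact_bilin.1 v.2).
rewrite (sum_coassoc _ K_trilin) in vanish.
have E11_lin : linmap (fun z => E one one (ali z)) by exact: linmap_comp (E_lin _ _) alphaV_lin.
rewrite -[h]alphaVK -[ali h]alphaVK -E11 -[RHS]vanish.
rewrite -[X in E one one (ali X)]counitl (linmap_sum E11_lin).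
by apply: eq_bigr => u _; rewrite K_antipode (linmapZ E11_lin).
Qed.

End CoinvDefectVanishes.

Lemma omega_coinv h : coinv O F (om h).
Proof.
move=> f f_bilin; rewrite big_seq1; apply/eqP; rewrite -subr_eq0; apply/eqP.
exact: (@coinv_defect0 k^o).
Qed.

Lemma ract_lact_d a b c :
  (a .> d b) <. c = al a .> d (b ** ali c) + (- (a ** b)) .> d c.
Proof.
rewrite -{1}[c]alphaVK -lractA.
have -> : d b <. ali c = d (b ** ali c) - b .> d (ali c) by rewrite d_leibniz addrC addKr.
by rewrite (linmapB (lact_bilin.1 _)) lactA d_alphaV gammaVK (linmapN (lact_bilin.2 _)).
Qed.

Lemma lact_d_span w : exists s : seq (H * H), w = \sum_(p <- s) (p.1 .> d p.2).
Proof.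
have [s ->] := d_span w.
elim: s => [|t s [s' IH]]; first by exists [::]; rewrite !big_nil.
exists [:: (al t.1.1, t.1.2 ** ali t.2), (- (t.1.1 ** t.1.2), t.2) & s'].
by rewrite !big_cons IH addrA ract_lact_d.
Qed.

Definition coinv_proj w := \sum_(q <- ph w) (S q.1 .> q.2).

Lemma coinv_proj_bilin : bilinmap (fun a w => S a .> w).
Proof. exact: bilinmap_compl lact_bilin antipode_lin. Qed.

Lemma coinv_proj_lin : linmap coinv_proj.
Proof. exact: sum_coaction_lin coinv_proj_bilin. Qed.

Lemma coinv_projE w : coinv O F w -> coinv_proj w = w.
Proof.
move=> w_coinv; rewrite /coinv_proj (sum_coaction_coinv coinv_proj_bilin w_coinv).
by rewrite antipode1 lact1 gammaVK.
Qed.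

Lemma coinv_proj_lact a w : coinv O F w -> coinv_proj (a .> w) = e a *: g w.
Proof.
move=> w_coinv; rewrite /coinv_proj (sum_coaction_lact _ _ coinv_proj_bilin).
transitivity (\sum_(p <- D a) ((S p.1 ** p.2) .> w)); last first.
  by rewrite -(linmap_sum (lact_bilin.2 w)) antipodel (linmapZ (lact_bilin.2 w)) lact1.
apply: eq_bigr => p _.
rewrite (sum_coaction_coinv (C := fun u v => S (p.1 ** u) .> (p.2 .> v))) //.
  by rewrite mulh1 antipode_alpha lactA gammaVK.
exact: bilinmap_comp lact_bilin (linmap_comp antipode_lin (hmul_bilin.1 _)) (lact_bilin.1 _).
Qed.

Lemma coinv_proj_lact_d a b : coinv_proj (a .> d b) = e a *: g (om b).
Proof.
rewrite d_omega (linmap_sum (lact_bilin.1 a)) (linmap_sum coinv_proj_lin).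
transitivity (\sum_(p <- D b) ((e a * e p.1) *: g (g (om p.2)))).
  apply: eq_bigr => p _; rewrite -{1}[a]alphaVK lactA -omega_alpha.
  rewrite coinv_proj_lact; last exact: omega_coinv.
  by rewrite epsM eps_alphaV omega_alpha.
rewrite -[in RHS](alphaVK b) omega_alpha -counitl (linmap_sum omega_lin).
rewrite !(linmap_sum gamma_lin) scaler_sumr; apply: eq_bigr => p _.
by rewrite (linmapZ omega_lin) !(linmapZ gamma_lin) scalerA.
Qed.

Lemma coinv_omega w : coinv O F w -> exists h, w = om h.
Proof.
move=> w_coinv; have [s w_def] := lact_d_span w.
exists (al (\sum_(p <- s) e p.1 *: p.2)).
rewrite -(coinv_projE w_coinv) w_def (linmap_sum coinv_proj_lin) omega_alpha.
rewrite (linmap_sum omega_lin) (linmap_sum gamma_lin); apply: eq_bigr => p _.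
by rewrite coinv_proj_lact_d (linmapZ omega_lin) (linmapZ gamma_lin).
Qed.

Lemma coinvP w : coinv O F w <-> exists h, w = om h.
Proof. by split=> [/coinv_omega|[h ->]] //; exact: omega_coinv. Qed.

Lemma coinv_gamma w : coinv O F w -> coinv O F (g w).
Proof.
move=> w_coinv f f_bilin; rewrite big_seq1 gammaK.
have fag_bilin : bilinmap (W := k^o) (fun u v => f (al u) (g v)).
  exact: bilinmap_comp (f_bilin : bilinmap (W := k^o) f) alpha_lin gamma_lin.
by rewrite (@sum_coaction_gamma k^o) // (sum_coaction_coinv fag_bilin) // alpha1 gammaVK.
Qed.

Lemma tangent_alphaV X : tangent O F X -> tangent O F (fun h => X (ali h)).
Proof.
case=> X_lin X1 X_R; split=> [c x y|/=|h [eh omh]].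
- by rewrite alphaV_lin X_lin.
- by rewrite alphaV1.
- by apply: X_R; split; rewrite ?eps_alphaV ?omega_alphaV ?omh ?(linmap0 gammaV_lin).
Qed.

Lemma tangent_comb (c : k) X Y : tangent O F X -> tangent O F Y ->
  tangent O F (fun h => c * X h + Y h).
Proof.
case=> X_lin X1 X_R [Y_lin Y1 Y_R]; split=> [c' x y|/=|h hR].
- by rewrite X_lin Y_lin mulrDr mulrCA addrACA -mulrDr.
- by rewrite X1 Y1 mulr0 addr0.
- by rewrite X_R // Y_R // mulr0 addr0.
Qed.

Lemma tangent_lact_d_sum0 X (s : seq (H * H)) : tangent O F X ->
  \sum_(p <- s) (p.1 .> d p.2) = 0 -> \sum_(p <- s) e p.1 * X p.2 = 0.
Proof.
case=> X_lin X1 X_R s0.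
pose u := \sum_(p <- s) e p.1 *: p.2.
have om_u : om u = 0.
  apply: (can_inj gammaK); rewrite (linmap0 gamma_lin) -(linmap0 coinv_proj_lin) -s0.
  rewrite (linmap_sum coinv_proj_lin) (linmap_sum omega_lin) (linmap_sum gamma_lin).
  by apply: eq_bigr => p _; rewrite coinv_proj_lact_d (linmapZ omega_lin) (linmapZ gamma_lin).
have : X (u - e u *: one) = 0.
  apply: X_R; split; first by rewrite (linformB eps_lin) (linformZ eps_lin) eps1 mulr1 subrr.
  by rewrite (linmapB omega_lin) (linmapZ omega_lin) omega1 scaler0 subr0 om_u.
rewrite (linformB X_lin) (linformZ X_lin) X1 mulr0 subr0 (linform_sum X_lin) => Xu0.
by rewrite -[RHS]Xu0; apply: eq_bigr => p _; rewrite (linformZ X_lin).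
Qed.

Lemma eq_tangent_lact_d_sum X (s s' : seq (H * H)) : tangent O F X ->
  \sum_(p <- s) (p.1 .> d p.2) = \sum_(p <- s') (p.1 .> d p.2) ->
  \sum_(p <- s) e p.1 * X p.2 = \sum_(p <- s') e p.1 * X p.2.
Proof.
move=> tX ss'; apply/eqP; rewrite -subr_eq0; apply/eqP.
have := tangent_lact_d_sum0 (s := s ++ [seq (- p.1, p.2) | p <- s']) tX.
rewrite !big_cat !big_map /=.
have -> : \sum_(p <- s') (- p.1 .> d p.2) = - \sum_(p <- s') (p.1 .> d p.2).
  by rewrite -sumrN; apply: eq_bigr => p _; rewrite (linmapN (lact_bilin.2 _)).
have -> : \sum_(p <- s') e (- p.1) * X p.2 = - \sum_(p <- s') e p.1 * X p.2.
  by rewrite -sumrN; apply: eq_bigr => p _; rewrite (linformN eps_lin) mulNr.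
by rewrite ss' subrr; apply.
Qed.

Definition lact_d_repr w : seq (H * H) := projT1 (cid (lact_d_span w)).

Lemma lact_d_reprE w : w = \sum_(p <- lact_d_repr w) (p.1 .> d p.2).
Proof. by rewrite /lact_d_repr; case: cid. Qed.

Definition pairing X w : k := \sum_(p <- lact_d_repr w) e p.1 * X p.2.

Lemma pairing_lact_d_sum X (s : seq (H * H)) : tangent O F X ->
  pairing X (\sum_(p <- s) (p.1 .> d p.2)) = \sum_(p <- s) e p.1 * X p.2.
Proof. by move=> tX; apply: eq_tangent_lact_d_sum tX _; rewrite -lact_d_reprE. Qed.

Lemma pairing_lact_d X a b : tangent O F X -> pairing X (a .> d b) = e a * X b.
Proof. by move=> tX; have := pairing_lact_d_sum [:: (a, b)] tX; rewrite !big_seq1. Qed.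

Lemma pairing_omega X h : tangent O F X -> pairing X (om h) = X (ali h).
Proof.
move=> tX; have [X_lin _ _] := tX.
rewrite /omegaG -(big_map (fun q => (S q.1, q.2)) xpredT (fun p => p.1 .> d p.2)).
rewrite pairing_lact_d_sum // big_map -counitl (linform_sum X_lin).
by apply: eq_bigr => p _; rewrite eps_antipode (linformZ X_lin).
Qed.

Lemma pairing_linform X : tangent O F X -> linform (pairing X).
Proof.
move=> tX c x y; have [sx ->] := lact_d_span x; have [sy ->] := lact_d_span y.
have -> : c *: \sum_(p <- sx) (p.1 .> d p.2) + \sum_(p <- sy) (p.1 .> d p.2) =
    \sum_(p <- [seq (c *: q.1, q.2) | q <- sx] ++ sy) (p.1 .> d p.2).
  rewrite big_cat big_map scaler_sumr; congr (_ + _).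
  by apply: eq_bigr => p _; rewrite (linmapZ (lact_bilin.2 _)).
rewrite !pairing_lact_d_sum // big_cat big_map mulr_sumr; congr (_ + _).
by apply: eq_bigr => p _; rewrite (linformZ eps_lin) mulrA.
Qed.

Lemma pairing_comb (c : k) X Y w : tangent O F X -> tangent O F Y ->
  pairing (fun h => c * X h + Y h) w = c * pairing X w + pairing Y w.
Proof.
move=> tX tY; have [s ->] := lact_d_span w.
rewrite !pairing_lact_d_sum //; last exact: tangent_comb.
by rewrite mulr_sumr -big_split; apply: eq_bigr => p _; rewrite mulrDr mulrCA.
Qed.

Lemma pairing_gamma X w : tangent O F X ->
  pairing (fun h => X (ali h)) (g w) = pairing X w.
Proof.
move=> tX; have [s ->] := lact_d_span w.
have -> : g (\sum_(p <- s) (p.1 .> d p.2)) =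
    \sum_(p <- [seq (al q.1, al q.2) | q <- s]) (p.1 .> d p.2).
  rewrite big_map (linmap_sum gamma_lin).
  by apply: eq_bigr => p _; rewrite gamma_lact d_alpha.
rewrite !pairing_lact_d_sum //; last exact: tangent_alphaV.
by rewrite big_map; apply: eq_bigr => p _; rewrite eps_alpha alphaK.
Qed.

Lemma pairing_unique (B : (H -> k) -> Gm -> k) :
  (forall X, tangent O F X -> linform (B X)) ->
  (forall X, tangent O F X -> forall a b, B X (a .> d b) = e a * X b) ->
  forall X, tangent O F X -> forall w, B X w = pairing X w.
Proof.
move=> B_lin B_d X tX w; have [s ->] := lact_d_span w.
rewrite pairing_lact_d_sum // (linform_sum (B_lin X tX)).
by apply: eq_bigr => p _; exact: B_d.
Qed.

Lemma tangent_linform_omega (l : Gm -> k) : linform l -> tangent O F (fun h => l (om (al h))).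
Proof.
move=> l_lin; split=> [c x y|/=|h [_ omh]].
- by rewrite alpha_lin omega_lin l_lin.
- by rewrite alpha1 omega1 (linform0 l_lin).
- by rewrite omega_alpha omh (linmap0 gamma_lin) (linform0 l_lin).
Qed.

Lemma pairing_nondegenerate_coinv w : coinv O F w ->
  (forall X, tangent O F X -> pairing X w = 0) -> w = 0.
Proof.
move=> /coinv_omega[h ->] pairing0; have [//|om_neq0] := eqVneq (om h) 0.
have [l l_lin l1] := exists_linform_eq1 om_neq0.
have := pairing0 _ (tangent_linform_omega l_lin).
rewrite pairing_omega; last exact: tangent_linform_omega.
by rewrite alphaVK l1 => /eqP; rewrite oner_eq0.
Qed.

Lemma pairing_nondegenerate_tangent X : tangent O F X ->
  (forall w, coinv O F w -> pairing X w = 0) -> forall h, X h = 0.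
Proof.
move=> tX pairing0 h; rewrite -[h]alphaK -pairing_omega //.
exact: pairing0 (omega_coinv _).
Qed.

End HomHopf.

Unset Implicit Arguments.

Theorem mainTheorem3 (k : fieldType) (H : lmodType k) (O : HomHopfOps H)
  (Gm : lmodType k) (F : FODCOps H Gm) :
  is_monoidal_HomHopf O -> bijective_antipode O ->
  is_HomFODC O F -> is_left_covariant O F ->
  (* the automorphism X |-> X o alpha^-1 preserves the tangent space *)
  (forall X, tangent O F X -> tangent O F (fun h => X (halphainv O h))) /\
  exists B : (H -> k) -> Gm -> k,
    (* bilinear on T_Gamma x Gamma *)
    [/\ (forall X, tangent O F X -> linform (B X)),
        (forall (c : k) X Y, tangent O F X -> tangent O F Y -> forall w,
            B (fun h => c * X h + Y h) w = c * B X w + B Y w),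
        (* morphism in H~(M_k) *)
        (forall X, tangent O F X -> forall w,
            B (fun h => X (halphainv O h)) (ggamma F w) = B X w),
        (* defining property *)
        (forall X, tangent O F X -> forall h g,
            B X (lact F h (dd F g)) = heps O h * X g) &
        (* uniqueness *)
        (forall B' : (H -> k) -> Gm -> k,
           (forall X, tangent O F X -> linform (B' X)) ->
           (forall (c : k) X Y, tangent O F X -> tangent O F Y -> forall w,
              B' (fun h => c * X h + Y h) w = c * B' X w + B' Y w) ->
           (forall X, tangent O F X -> forall w,
              B' (fun h => X (halphainv O h)) (ggamma F w) = B' X w) ->
           (forall X, tangent O F X -> forall h g,
              B' X (lact F h (dd F g)) = heps O h * X g) ->
           forall X, tangent O F X -> forall w, B' X w = B X w)]
    /\
    (* coH Gamma = omega_Gamma(H), gamma restricts to it *)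
    [/\ (forall w, coinv O F w <-> exists h, w = omegaG O F h),
        (forall w, coinv O F w -> coinv O F (ggamma F w)),
        (* nondegenerate dual pairing between T_Gamma and coH Gamma *)
        (forall w, coinv O F w -> (forall X, tangent O F X -> B X w = 0) -> w = 0),
        (forall X, tangent O F X -> (forall w, coinv O F w -> B X w = 0) ->
            forall h, X h = 0) &
        (forall X, tangent O F X -> forall h,
            B X (omegaG O F h) = X (halphainv O h))].
Proof.
move=> O_hopf _ F_fodc F_cov; split=> [X|]; first exact: tangent_alphaV.
exists (pairing O_hopf F_fodc); split; split.
- exact: pairing_linform.
- move=> c X Y tX tY w; exact: pairing_comb.
- move=> X tX w; exact: pairing_gamma.
- move=> X tX h g; exact: pairing_lact_d.
- move=> B B_lin _ _ B_d; exact: pairing_unique.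
- exact: coinvP.
- exact: coinv_gamma.
- exact: pairing_nondegenerate_coinv.
- exact: pairing_nondegenerate_tangent.
- move=> X tX h; exact: pairing_omega.
Qed.
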